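(* Let $M_1=\begin{bmatrix} A_1 & B_1\\ 0 & C_1\end{bmatrix}$ and $M_2=\begin{bmatrix} A_2 & B_2\\ 0 & C_2\end{bmatrix}$ be two $m\times n$ ACI-matrices over a field $\mathbb{F}$, where $A_1$ and $A_2$ have the same number $n_1$ of columns. Suppose there are a nonsingular constant matrix $R$ of order $m$ and permutation matrices $Q$ of order $n_1$ and $Q'$ of order $n-n_1$ such that $$\begin{bmatrix} A_2 & B_2\\ 0 & C_2\end{bmatrix}=R\begin{bmatrix} A_1 & B_1\\ 0 & C_1\end{bmatrix}\begin{bmatrix} Q & 0\\ 0 & Q'\end{bmatrix}.$$ If $A_1$ and $A_2$ both have linearly independent rows, then $A_1\sim A_2$ and $C_1\sim C_2$.
   Context: Let $\mathbb{F}$ be a field. An ACI-matrix is a matrix with entries in $\mathbb{F}[x_1,\dots,x_k]$ whose entries are polynomials of degree at most one and such that no indeterminate appears in two different columns. Two ACI-matrices satisfy $N\sim N'$ (equivalent) if $N'=RNQ$ for some nonsingular constant matrix $R$ over $\mathbb{F}$ and some permutation matrix $Q$. Blocks may be degenerate (zero rows or zero columns). Linear independence of rows is over $\mathbb{F}$: if a column involves indeterminates $y_1,\dots,y_t$, its entries lie in the $\mathbb{F}$-vector space $\mathbb{F}+\mathbb{F}y_1+\dots+\mathbb{F}y_t$, and rows are vectors in the product of these spaces over all columns. *)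

From HB Require Import structures.
From mathcomp Require Import all_boot all_order all_algebra all_fingroup.
From mathcomp Require Import mpoly.
Set Implicit Arguments. Unset Strict Implicit. Unset Printing Implicit Defensive.
Import GRing.Theory.
Local Open Scope ring_scope.

Definition deg_le1 (F : fieldType) (k : nat) (p : {mpoly F[k]}) : Prop :=
  forall mo : 'X_{1..k}, mo \in msupp p -> (mdeg mo <= 1)%N.

Definition var_in (F : fieldType) (k : nat) (l : 'I_k) (p : {mpoly F[k]}) : Prop :=
  exists2 mo : 'X_{1..k}, mo \in msupp p & (0 < mo l)%N.

Definition ACI (F : fieldType) (k r c : nat) (N : 'M[{mpoly F[k]}]_(r, c)) : Prop :=
  (forall i j, deg_le1 (N i j)) /\
  (forall (l : 'I_k) (i i' : 'I_r) (j j' : 'I_c),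
      j != j' -> var_in l (N i j) -> ~ var_in l (N i' j')).

Definition cst_mx (F : fieldType) (k r c : nat) (R : 'M[F]_(r, c))
  : 'M[{mpoly F[k]}]_(r, c) := map_mx (fun a => a%:MP) R.

Definition rows_indep (F : fieldType) (k r c : nat) (N : 'M[{mpoly F[k]}]_(r, c))
  : Prop :=
  forall v : 'rV[F]_r, cst_mx k v *m N = 0 -> v = 0.

(* N ~ N' : N' = R N Q with R nonsingular constant and Q a permutation
   matrix (so N and N' have the same size). *)
Definition aci_equiv (F : fieldType) (k r r' c : nat)
  (N : 'M[{mpoly F[k]}]_(r, c)) (N' : 'M[{mpoly F[k]}]_(r', c)) : Prop :=
  exists (e : r = r') (R : 'M[F]_r') (s : 'S_c),
    R \in unitmx /\ N' = cst_mx k R *m castmx (e, erefl c) N *m perm_mx s.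

From HB Require Import structures.
From mathcomp Require Import all_boot all_order all_algebra all_fingroup.
From mathcomp Require Import mpoly.
Set Implicit Arguments.
Unset Strict Implicit.
Unset Printing Implicit Defensive.
Import GRing.Theory.
Local Open Scope ring_scope.

(* Write R in block form [R11 R12; R21 R22] along the row partitions (p2, q2)
   and (p1, q1). The lower-left block of the matrix identity reads
   0 = R21 A1 Q, so R21 = 0 because A1 has independent rows; the same argument
   for R^-1, using the rows of A2, shows that R^-1 is block upper triangular
   too. Hence the rectangular blocks R11 and R22 have two-sided inverses, which
   forces p1 = p2 by a rank count, and A2 = R11 A1 Q, C2 = R22 C1 Q'. *)

Lemma cst_mxM (F : fieldType) k m n p (A : 'M[F]_(m, n)) (B : 'M[F]_(n, p)) :
  cst_mx k (A *m B) = cst_mx k A *m cst_mx k B.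
Proof. exact: (map_mxM (@mpolyC k F)). Qed.

Lemma cst_mx1 (F : fieldType) k n : cst_mx k (1%:M : 'M[F]_n) = 1%:M.
Proof. exact: (map_mx1 (@mpolyC k F)). Qed.

Lemma castmx_cst_mul (F : fieldType) k m m' n (e : m = m')
    (A : 'M[{mpoly F[k]}]_(m, n)) :
  castmx (e, erefl) A = cst_mx k (castmx (e, erefl) 1%:M) *m A.
Proof. by case: m' / e in A *; rewrite !castmx_id cst_mx1 mul1mx. Qed.

Lemma castmx1_inverse (R : pzRingType) m m' (e : m = m') :
  castmx (erefl, e) (1%:M : 'M[R]_m) *m castmx (e, erefl) 1%:M = 1%:M /\
  castmx (e, erefl) (1%:M : 'M[R]_m) *m castmx (erefl, e) 1%:M = 1%:M.
Proof. by case: m' / e; rewrite !castmx_id mul1mx. Qed.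

Lemma eq_dim_mx_inverse (F : fieldType) m n (X : 'M[F]_(m, n)) (Y : 'M[F]_(n, m)) :
  Y *m X = 1%:M -> X *m Y = 1%:M -> m = n.
Proof.
have dim_le a b (A : 'M[F]_(a, b)) (B : 'M[F]_(b, a)) : A *m B = 1%:M -> (a <= b)%N.
  move=> AB; rewrite -(mxrank1 F a) -AB.
  exact: leq_trans (mxrankM_maxr A B) (rank_leq_row B).
by move=> YX XY; apply/eqP; rewrite eqn_leq (dim_le _ _ X Y) // (dim_le _ _ Y X).
Qed.

Lemma mul_block_upper_mx (R : pzRingType) p1 q1 p2 q2 n1 n2
    (X : 'M[R]_(p2 + q2, p1 + q1))
    (A : 'M_(p1, n1)) (B : 'M_(p1, n2)) (C : 'M_(q1, n2)) :
  X *m block_mx A B 0 C =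
    block_mx (ulsubmx X *m A) (ulsubmx X *m B + ursubmx X *m C)
             (dlsubmx X *m A) (dlsubmx X *m B + drsubmx X *m C).
Proof. by rewrite -{1}[X]submxK mulmx_block !mulmx0 !addr0. Qed.

Lemma mul_block_upper_diag (R : pzRingType) p q n1 n2
    (A : 'M[R]_(p, n1)) (B : 'M_(p, n2)) (C : 'M_(q, n2))
    (P : 'M_n1) (P' : 'M_n2) :
  block_mx A B 0 C *m block_mx P 0 0 P' =
    block_mx (A *m P) (B *m P') 0 (C *m P').
Proof. by rewrite mulmx_block !mulmx0 !mul0mx !addr0 !add0r. Qed.

Lemma block_upper_mx_inverse (R : pzRingType) p1 q1 p2 q2
    (X : 'M[R]_(p2 + q2, p1 + q1)) (Y : 'M[R]_(p1 + q1, p2 + q2)) :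
  dlsubmx X = 0 -> dlsubmx Y = 0 -> Y *m X = 1%:M -> X *m Y = 1%:M ->
  [/\ ulsubmx Y *m ulsubmx X = 1%:M, ulsubmx X *m ulsubmx Y = 1%:M,
      drsubmx Y *m drsubmx X = 1%:M & drsubmx X *m drsubmx Y = 1%:M].
Proof.
move=> X0 Y0; rewrite -{1 2}[X]submxK -{1 2}[Y]submxK X0 Y0 !mulmx_block.
rewrite !mulmx0 !mul0mx !addr0 !add0r !scalar_mx_block.
by case/eq_block_mx=> YX11 _ _ YX22; case/eq_block_mx=> XY11 _ _ XY22.
Qed.

Lemma rows_indep_mul_eq0 (F : fieldType) k r c q
    (A : 'M[{mpoly F[k]}]_(r, c)) (X : 'M[F]_(q, r)) :
  rows_indep A -> cst_mx k X *m A = 0 -> X = 0.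
Proof.
move=> indepA XA0; apply/row_matrixP=> i; rewrite row0; apply: indepA.
by rewrite /cst_mx map_row -/(cst_mx k X) -row_mul XA0 row0.
Qed.

Lemma rows_indep_mul_perm (F : fieldType) k r c (s : 'S_c)
    (A : 'M[{mpoly F[k]}]_(r, c)) :
  rows_indep A -> rows_indep (A *m perm_mx s).
Proof.
move=> indepA v vAs0; apply: indepA.
have := congr1 (mulmx^~ (perm_mx s^-1)) vAs0.
by rewrite /= mul0mx -!mulmxA -perm_mxM mulgV perm_mx1 mulmx1.
Qed.

Section CstMulBlockUpper.

Variables (F : fieldType) (k p1 q1 p2 q2 n1 n2 : nat).
Variables (A1 : 'M[{mpoly F[k]}]_(p1, n1)) (B1 : 'M[{mpoly F[k]}]_(p1, n2))
  (C1 : 'M[{mpoly F[k]}]_(q1, n2)).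
Variables (A2 : 'M[{mpoly F[k]}]_(p2, n1)) (B2 : 'M[{mpoly F[k]}]_(p2, n2))
  (C2 : 'M[{mpoly F[k]}]_(q2, n2)).
Variable X : 'M[F]_(p2 + q2, p1 + q1).
Hypothesis eqM : cst_mx k X *m block_mx A1 B1 0 C1 = block_mx A2 B2 0 C2.

Lemma cst_mul_block_upper_dlsubmx0 : rows_indep A1 -> dlsubmx X = 0.
Proof.
move=> indepA1; apply: (rows_indep_mul_eq0 indepA1).
move: eqM; rewrite mul_block_upper_mx => /eq_block_mx[_ _ + _].
by rewrite /cst_mx map_dlsubmx.
Qed.

Lemma cst_mul_block_upper_diag :
  dlsubmx X = 0 ->
  A2 = cst_mx k (ulsubmx X) *m A1 /\ C2 = cst_mx k (drsubmx X) *m C1.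
Proof.
move=> X0; move: eqM; rewrite mul_block_upper_mx => /eq_block_mx[<- _ _ <-].
by rewrite /cst_mx map_ulsubmx map_drsubmx -map_dlsubmx X0 map_mx0 mul0mx add0r.
Qed.

End CstMulBlockUpper.

Lemma aci_equiv_mx_inverse (F : fieldType) k p1 p2 n
    (A1 : 'M[{mpoly F[k]}]_(p1, n)) (A2 : 'M[{mpoly F[k]}]_(p2, n))
    (X : 'M[F]_(p2, p1)) (Y : 'M[F]_(p1, p2)) (s : 'S_n) :
  Y *m X = 1%:M -> X *m Y = 1%:M -> A2 = cst_mx k X *m A1 *m perm_mx s ->
  aci_equiv A1 A2.
Proof.
move=> YX XY eqA; have eq_p := eq_dim_mx_inverse XY YX; subst p2.
exists erefl, X, s; rewrite castmx_id; split=> //.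
by case: (mulmx1_unit XY).
Qed.

Theorem lemma4p3 (F : fieldType) (k m n1 n2 p1 q1 p2 q2 : nat)
  (e1 : (p1 + q1)%N = m) (e2 : (p2 + q2)%N = m)
  (A1 : 'M[{mpoly F[k]}]_(p1, n1)) (B1 : 'M[{mpoly F[k]}]_(p1, n2))
  (C1 : 'M[{mpoly F[k]}]_(q1, n2))
  (A2 : 'M[{mpoly F[k]}]_(p2, n1)) (B2 : 'M[{mpoly F[k]}]_(p2, n2))
  (C2 : 'M[{mpoly F[k]}]_(q2, n2))
  (R : 'M[F]_m) (Q : 'S_n1) (Q' : 'S_n2) :
  ACI (block_mx A1 B1 0 C1) -> ACI (block_mx A2 B2 0 C2) ->
  R \in unitmx ->
  castmx (e2, erefl (n1 + n2)%N) (block_mx A2 B2 0 C2) =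
    cst_mx k R *m castmx (e1, erefl (n1 + n2)%N) (block_mx A1 B1 0 C1)
      *m block_mx (perm_mx Q) 0 0 (perm_mx Q') ->
  rows_indep A1 -> rows_indep A2 ->
  aci_equiv A1 A2 /\ aci_equiv C1 C2.
Proof.
move=> _ _ unitR eqM indepA1 indepA2.
move: e1 R unitR eqM; case: m / e2 => e1 R unitR.
rewrite castmx_id castmx_cst_mul mulmxA -cst_mxM -mulmxA mul_block_upper_diag.
set X := R *m _ => /esym eqM.
pose Y := castmx (erefl, e1) 1%:M *m invmx R.
have [DC CD] := castmx1_inverse F e1.
have YX : Y *m X = 1%:M.
  by rewrite mulmxA -(mulmxA _ (invmx R)) mulVmx // mulmx1 DC.
have XY : X *m Y = 1%:M.
  by rewrite mulmxA -(mulmxA R) CD mulmx1 mulmxV.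
have eqM' : cst_mx k Y *m block_mx A2 B2 0 C2 =
    block_mx (A1 *m perm_mx Q) (B1 *m perm_mx Q') 0 (C1 *m perm_mx Q').
  by rewrite -eqM mulmxA -cst_mxM YX cst_mx1 mul1mx.
have X0 := cst_mul_block_upper_dlsubmx0 eqM (rows_indep_mul_perm (s := Q) indepA1).
have Y0 := cst_mul_block_upper_dlsubmx0 eqM' indepA2.
have [YX11 XY11 YX22 XY22] := block_upper_mx_inverse X0 Y0 YX XY.
have [eqA eqC] := cst_mul_block_upper_diag eqM X0.
split.
  by apply: (aci_equiv_mx_inverse YX11 XY11); rewrite eqA mulmxA.
by apply: (aci_equiv_mx_inverse YX22 XY22); rewrite eqC mulmxA.
Qed.
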